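(* Let $G=(V,E)$ be a connected undirected graph with $n=|V|$ nodes, let $\beta$ be a finite set (batch) of new edges on $V$, and let $G'=(V,E\cup\beta)$. For nodes $s\neq t$, let $d_s(t)$, $\sigma_{st}$ and $\mathcal{S}_{st}$ denote the distance, the number of shortest paths and the set of shortest paths from $s$ to $t$ in $G$, and let $d'_s(t)$, $\sigma'_{st}$, $\mathcal{S}'_{st}$ denote the same quantities in $G'$. Let $S=\{p_{(1)},\dots,p_{(r)}\}$ be a set of $r$ shortest paths of $G$ sampled according to $\pi_G$, i.e. for each $k=1,\dots,r$ and each shortest path $p_{st}$ of $G$ between distinct nodes $s,t$, $\Pr(p_{(k)}=p_{st})=\pi_G(p_{st})=\frac{1}{n(n-1)}\cdot\frac{1}{\sigma_{st}}$ (equivalently: an ordered pair $(s,t)$ of distinct nodes is chosen uniformly at random and then a path is chosen uniformly at random from $\mathcal{S}_{st}$). Let $\mathcal{P}$ be the procedure that builds $S'=\{p'_{(1)},\dots,p'_{(r)}\}$ by replacing each sampled path $p_{(k)}=p_{st}\in S$ (with endpoints $s,t$) by a path $p'_{st}$ according to the rules: (1) $p'_{st}=p_{st}$ if $d'_s(t)=d_s(t)$ and $\sigma'_{st}=\sigma_{st}$; (2) otherwise, $p'_{st}$ is selected uniformly at random among $\mathcal{S}'_{st}$. Then each $p'_{st}$ is a shortest path of $G'$, and for every shortest path $p'_{xy}$ of $G'$ between distinct nodes $x,y$ and every $k=1,\dots,r$, \[\Pr(p'_{(k)}=p'_{xy})=\frac{1}{n(n-1)}\cdot\frac{1}{\s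igma'_{xy}}.\]
   Context: Shortest paths, distances and path counts are taken in the (undirected) graphs $G$ and $G'$; $G'$ is obtained from $G$ by inserting the edges of the batch $\beta$ (edge insertions only). *)

From mathcomp Require Import all_boot all_order all_algebra.
From mathcomp Require Import boolp.
Set Implicit Arguments. Unset Strict Implicit. Unset Printing Implicit Defensive.
Import Order.TTheory GRing.Theory Num.Theory.

Section ShortestPaths.
Variable V : finType.

(* A path is represented by its full vertex list [s; v1; ...; t]. *)
(* [walk e s t q] : q is a walk in the graph with edge relation e from s to t;
   its length (number of edges) is (size q).-1. *)
Definition walk (e : rel V) (s t : V) (q : seq V) : bool :=
  if q is x :: p then [&& x == s, path e x p & last x p == t] else false.

Definition shortest (e : rel V) (s t : V) (q : seq V) : Prop :=
  walk e s t q /\ forall q', walk e s t q' -> size q <= size q'.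

(* A finite list of all duplicate-free vertex sequences; every shortest path is
   duplicate-free, so it is a finite superset of every set of shortest paths. *)
Definition cand : seq (seq V) :=
  undup (flatten [seq permutations (enum A) | A : {set V}]).

Definition SP (e : rel V) (s t : V) : seq (seq V) :=
  undup [seq q <- cand | `[< shortest e s t q >] ].

Definition sigma (e : rel V) (s t : V) : nat := size (SP e s t).

(* d_s(t) : length of a shortest path from s to t (0 if none exists). *)
Definition dist (e : rel V) (s t : V) : nat := (size (head [::] (SP e s t))).-1.

(* Edge relation of G' = (V, E \cup beta) (beta read as undirected edges). *)
Definition addE (e beta : rel V) : rel V := fun x y => [|| e x y, beta x y | beta y x].

Variable R : realFieldType.
Local Open Scope ring_scope.

Definition piG (e : rel V) (q : seq V) : R :=
  if q is s :: p then
    let t := last s p in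
    if (s != t) && `[< shortest e s t q >]
    then ((#|V| * #|V|.-1)%:R)^-1 * ((sigma e s t)%:R)^-1 else 0
  else 0.

(* Transition kernel of the procedure P: probability that the sampled path q
   (with endpoints s,t) is replaced by q', where e' is the edge relation of G'. *)
Definition Pker (e e' : rel V) (q q' : seq V) : R :=
  if q is s :: p then
    let t := last s p in
    if (dist e' s t == dist e s t) && (sigma e' s t == sigma e s t)
    then (q' == q)%:R
    else if q' \in SP e' s t then ((sigma e' s t)%:R)^-1 else 0
  else 0.

End ShortestPaths.

(** The kept path is still a shortest path of G' because rule (1) fires only
    when the distance did not change; rule (2) picks in S'_st.  Only sampled
    paths with endpoints x, y can move to p'_xy.  If rule (1) fires for (x, y),
    then S_xy is contained in S'_xy and has the same size, so S_xy = S'_xy and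
    the probability is pi_G(p'_xy) = 1/(n(n-1) sigma'_xy).  Otherwise each of
    the sigma_xy paths of S_xy, of weight 1/(n(n-1) sigma_xy), moves to p'_xy
    with probability 1/sigma'_xy, and the total is again 1/(n(n-1) sigma'_xy). *)
From mathcomp Require Import all_boot all_order all_algebra.
From mathcomp Require Import boolp.
Import Order.TTheory GRing.Theory Num.Theory.
Set Implicit Arguments. Unset Strict Implicit. Unset Printing Implicit Defensive.

Section ShortestPaths.
Variable V : finType.
Implicit Types (e : rel V) (s t : V) (q : seq V).

Lemma walk_endpoints e1 e2 s t x y q :
  walk e1 s t q -> walk e2 x y q -> s = x /\ t = y.
Proof. by case: q => // a r /and3P[/eqP <- _ /eqP <-] /and3P[/eqP <- _ /eqP <-]. Qed.

Lemma walk_size_gt0 e s t q : walk e s t q -> (0 < size q)%N.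
Proof. by case: q. Qed.

Lemma walk_subrel e e' s t q : subrel e e' -> walk e s t q -> walk e' s t q.
Proof. by move=> ee'; case: q => //= x p /and3P[-> /(sub_path ee') -> ->]. Qed.

Lemma shortest_uniq e s t q : shortest e s t q -> uniq q.
Proof.
case: q => [[]//|x p [/and3P[/eqP xs xp /eqP pt] qmin]].
move: pt; case: (shortenP xp) => p' xp' uniq_p' sub_p' pt.
apply: (leq_size_uniq uniq_p').
  by move=> y; rewrite !inE => /orP[->//|/sub_p' ->]; rewrite orbT.
by apply: qmin; rewrite /walk xp' pt xs !eqxx.
Qed.

Lemma uniq_mem_cand q : uniq q -> q \in cand V.
Proof.
move=> uq; rewrite /cand mem_undup; apply/flattenP.
exists (permutations (enum [set x in q])).
  exact: (codom_f (fun A : {set V} => permutations (enum A))).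
rewrite mem_permutations; apply: uniq_perm; rewrite ?enum_uniq //.
by move=> x; rewrite mem_enum inE.
Qed.

Lemma SPP e s t q : reflect (shortest e s t q) (q \in SP e s t).
Proof.
rewrite /SP mem_undup mem_filter.
apply: (iffP andP) => [[/asboolP //] | sq].
by split; [apply/asboolP | exact: uniq_mem_cand (shortest_uniq sq)].
Qed.

Lemma filter_cand_SP e s t : [seq q <- cand V | q \in SP e s t] = SP e s t.
Proof.
rewrite [RHS]/SP undup_id ?filter_uniq ?undup_uniq //.
by apply: eq_filter => q; apply/SPP/asboolP.
Qed.

Lemma shortest_size_eq e s t q q' :
  shortest e s t q -> shortest e s t q' -> size q = size q'.
Proof. by move=> [wq qmin] [wq' q'min]; apply/eqP; rewrite eqn_leq qmin // q'min. Qed.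

Lemma connect_shortest e s t : connect e s t -> exists q, shortest e s t q.
Proof.
move=> /connectP[p sp pt].
have has_walk : exists n, `[< exists q, walk e s t q /\ size q = n >].
  exists (size (s :: p)); apply/asboolP; exists (s :: p).
  by rewrite /walk eqxx sp -pt eqxx.
case: (ex_minnP has_walk) => n /asboolP [q [wq <-]] qmin.
by exists q; split=> // q' wq'; apply: qmin; apply/asboolP; exists q'.
Qed.

Lemma dist_shortest e s t q : shortest e s t q -> dist e s t = (size q).-1.
Proof.
move=> sq; rewrite /dist.
have: q \in SP e s t by apply/SPP.
case E: (SP e s t) => [//|h r] _ /=.
have /SPP sh : h \in SP e s t by rewrite E mem_head.
by rewrite (shortest_size_eq sh sq).
Qed.

Lemma sigma_gt0 e s t q : shortest e s t q -> (0 < sigma e s t)%N.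
Proof. by move=> /SPP; rewrite /sigma; case: (SP e s t). Qed.

Section AddEdges.
Variables (e e' : rel V) (s t : V).
Hypotheses (ee' : subrel e e') (conn_st : connect e' s t)
           (dist_eq : dist e' s t = dist e s t).

Lemma shortest_subrel q : shortest e s t q -> shortest e' s t q.
Proof.
move=> sq; have [q0 sq0] := connect_shortest conn_st.
split; first exact: walk_subrel sq.1.
move=> q' wq'; apply: leq_trans (sq0.2 _ wq').
have size_eq : (size q).-1 = (size q0).-1.
  by rewrite -(dist_shortest sq) -(dist_shortest sq0) dist_eq.
by rewrite -(prednK (walk_size_gt0 sq.1)) -(prednK (walk_size_gt0 sq0.1)) size_eq.
Qed.

Lemma SP_subrel_eq : sigma e' s t = sigma e s t -> SP e' s t =i SP e s t.
Proof.
move=> sigma_eq; have SP_sub : {subset SP e s t <= SP e' s t}.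
  by move=> q /SPP/shortest_subrel/SPP.
by move=> q; rewrite (uniq_min_size (undup_uniq _) SP_sub (eq_leq sigma_eq)).2.
Qed.

End AddEdges.

Lemma subrel_addE e beta : subrel e (addE e beta).
Proof. by move=> x y exy; rewrite /addE exy. Qed.

Lemma connect_addE e beta s t : connect e s t -> connect (addE e beta) s t.
Proof. by apply: connect_sub => x y /(subrel_addE beta)/connect1. Qed.

End ShortestPaths.

Local Open Scope ring_scope.

Section Sampling.
Variables (R : realFieldType) (V : finType) (e e' : rel V).
Local Notation stable x y :=
  ((dist e' x y == dist e x y) && (sigma e' x y == sigma e x y)).

Lemma piG_SP x y p : x != y -> p \in SP e x y ->
  piG R e p = ((#|V| * #|V|.-1)%:R)^-1 * ((sigma e x y)%:R)^-1.
Proof.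
move=> xy /SPP sp; have /asboolP sp_true := sp.
case: p sp sp_true => [[]//|a r [/and3P[/eqP ax _ /eqP ry] _]].
by rewrite /piG /= ry ax xy => ->.
Qed.

Lemma Pker_SP x y p p' : p \in SP e x y ->
  Pker R e e' p p' =
    if stable x y then (p' == p)%:R
    else if p' \in SP e' x y then ((sigma e' x y)%:R)^-1 else 0.
Proof.
move=> /SPP [wp _]; case: p wp => // a r /and3P[/eqP ax _ /eqP ry].
by rewrite /Pker /= ry ax.
Qed.

Lemma Pker_support s t p p' : Pker R e e' p p' != 0 -> walk e s t p ->
  (p' = p /\ dist e' s t = dist e s t) \/ p' \in SP e' s t.
Proof.
case: p => [|a r]; first by rewrite /Pker eqxx.
move=> + /and3P[/eqP ax _ /eqP rt]; rewrite /Pker /= rt ax.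
case: ifP => [/andP[/eqP dist_eq _]|_].
  by rewrite pnatr_eq0 eqb0 negbK => /eqP; left.
by case: ifP => [|_]; [right | rewrite eqxx].
Qed.

Lemma piG_support p : piG R e p != 0 -> exists s t, shortest e s t p.
Proof.
case: p => [|a r]; first by rewrite eqxx.
rewrite /piG /=; case: ifP => [/andP[_ /asboolP sp] _|_]; last by rewrite eqxx.
by exists a, (last a r).
Qed.

(** Either [piG] vanishes on [p], or [p] is a shortest path whose endpoints
    differ from (x, y), and then it cannot move to [p']. *)
Lemma piG_Pker_out x y p p' : walk e' x y p' -> p \notin SP e x y ->
  piG R e p * Pker R e e' p p' = 0.
Proof.
move=> wp' /SPP pxy.
have [->|/piG_support [s [t sp]]] := eqVneq (piG R e p) 0; first by rewrite mul0r.
have [->|/Pker_support/(_ sp.1) [[ep' _]|/SPP [wp'' _]]] := eqVneq (Pker R e e' p p') 0.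
- by rewrite mulr0.
- by case: pxy; move: wp'; rewrite ep' => /walk_endpoints/(_ sp.1) [-> ->].
- by case: pxy; have [<- <-] := walk_endpoints wp'' wp'.
Qed.

Lemma sum_Pker_SP x y p' : subrel e e' -> connect e' x y -> shortest e' x y p' ->
  \sum_(p <- SP e x y) Pker R e e' p p' = (sigma e x y)%:R / (sigma e' x y)%:R.
Proof.
move=> ee' conn_xy sp'; have p'_in' : p' \in SP e' x y by apply/SPP.
rewrite (eq_big_seq _ (fun p => @Pker_SP x y p p')).
case: (boolP (stable x y)) => [/andP[/eqP dist_eq /eqP sigma_eq] | _].
  have p'_in : p' \in SP e x y by rewrite -(SP_subrel_eq ee' conn_xy dist_eq sigma_eq).
  rewrite (bigD1_seq p') ?undup_uniq //= eqxx big1 => [|p /negPf].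
    by rewrite addr0 -sigma_eq divff // pnatr_eq0 -lt0n (sigma_gt0 sp').
  by rewrite eq_sym => ->.
by rewrite p'_in' big_const_seq count_predT iter_addr_0 -[_ *+ _]mulr_natl.
Qed.

End Sampling.

Theorem lemma2 (R : realFieldType) (V : finType) (e beta : rel V)
  (e_sym : symmetric e) (e_irr : irreflexive e)
  (e_conn : forall s t : V, connect e s t) :
  (forall (s t : V) (p p' : seq V), s != t -> shortest e s t p ->
     0 < Pker R e (addE e beta) p p' -> shortest (addE e beta) s t p') /\
  (forall (x y : V) (p' : seq V), x != y -> shortest (addE e beta) x y p' ->
     \sum_(p <- cand V) piG R e p * Pker R e (addE e beta) p p'
       = ((#|V| * #|V|.-1)%:R)^-1 * ((sigma (addE e beta) x y)%:R)^-1).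
Proof.
set e' := addE e beta; have ee' : subrel e e' := subrel_addE beta.
have conn' s t : connect e' s t := connect_addE beta (e_conn s t).
split=> [s t p p' _ sp | x y p' xy sp'].
  move=> /lt0r_neq0 /Pker_support/(_ sp.1) [[-> dist_eq] | /SPP //].
  exact (shortest_subrel ee' (conn' s t) dist_eq sp).
rewrite (bigID (mem (SP e x y))) /= [X in _ + X]big1
  => [|p /(piG_Pker_out R) -> //]; last exact: sp'.1.
rewrite addr0 -big_filter filter_cand_SP.
under eq_big_seq => p pxy do rewrite (piG_SP R xy pxy).
have [q sq] := connect_shortest (e_conn x y).
rewrite -big_distrr /= (sum_Pker_SP R) // -mulrA mulKf // pnatr_eq0 -lt0n.
exact: sigma_gt0 sq.
Qed.
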